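(* Every Weetman graph is simply connected.
   Context: All graphs are simple and connected. For a vertex $v_0$ and a vertex $v$, $d(v_0,v)$ is the graph distance, and $\mathrm{pred}_{v_0}(v)=\{u : uv\in E(G),\ d(v_0,u)=d(v_0,v)-1\}$. A graph $G$ is Weetman if for every vertex $v_0$ both of the following hold: (Triangle Condition) for every two adjacent vertices $v,v'$ with $d(v_0,v)=d(v_0,v')=k$, there is a vertex $u$ with $d(v_0,u)=k-1$ and $uv,uv'\in E(G)$; (Interval Condition) for every vertex $v$, the subgraph of $G$ induced by $\mathrm{pred}_{v_0}(v)$ is connected. A loop in $G$ is a finite sequence of vertices $(v_0,\dots,v_k)$ with, for each $i<k$, $v_iv_{i+1}\in E(G)$ or $v_i=v_{i+1}$. Two loops $(v_0,\dots,v_{i-1},v_i,v_{i+1},\dots,v_k)$ and $(v_0,\dots,v_{i-1},v_{i+1},\dots,v_k)$ are related by an elementary homotopy (in either direction) if $v_i=v_{i+1}$, or $v_{i-1}=v_{i+1}$, or $v_{i-1}v_{i+1}\in E(G)$. A loop is contractible if it can be reduced to a single vertex by a finite sequence of elementary homotopies; $G$ is simply connected if every loop is contractible. *)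

From Stdlib Require Import Arith List.
Import ListNotations.

Section Graphs.
Variable V : Type.
Variable adj : V -> V -> Prop.

Definition simple_graph : Prop :=
  (forall u v, adj u v -> adj v u) /\ (forall v, ~ adj v v).

Inductive walkn : nat -> V -> V -> Prop :=
| walkn_refl : forall u, walkn 0 u u
| walkn_step : forall n u w v, adj u w -> walkn n w v -> walkn (S n) u v.

Definition connected_graph : Prop := forall u v, exists n, walkn n u v.

Definition dist (u v : V) (k : nat) : Prop :=
  walkn k u v /\ forall m, walkn m u v -> k <= m.

Definition predset (v0 v u : V) : Prop :=
  adj u v /\ exists k, dist v0 u k /\ dist v0 v (S k).

Inductive walk_in (P : V -> Prop) : V -> V -> Prop :=
| walk_in_refl : forall a, P a -> walk_in P a a
| walk_in_step : forall a b c, P a -> adj a b -> walk_in P b c -> walk_in P a c.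

(* The induced subgraph on P is connected (the empty one counts as connected). *)
Definition induced_connected (P : V -> Prop) : Prop :=
  forall a b, P a -> P b -> walk_in P a b.

Definition triangle_condition (v0 : V) : Prop :=
  forall v v' k, adj v v' -> dist v0 v k -> dist v0 v' k ->
    exists u, dist v0 u (k - 1) /\ adj u v /\ adj u v'.

Definition interval_condition (v0 : V) : Prop :=
  forall v, induced_connected (predset v0 v).

Definition weetman : Prop :=
  forall v0, triangle_condition v0 /\ interval_condition v0.

Fixpoint chain (x : V) (s : list V) : Prop :=
  match s with
  | [] => True
  | y :: s' => (adj x y \/ x = y) /\ chain y s'
  end.

Definition is_loop (l : list V) : Prop :=
  exists x s, l = x :: s /\ chain x s /\ last s x = x.

Definition hdelete (l l' : list V) : Prop :=
  (exists s1 x y s2, l = s1 ++ x :: y :: s2 /\ l' = s1 ++ y :: s2 /\ x = y) \/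
  (exists s1 a x b s2, l = s1 ++ a :: x :: b :: s2 /\ l' = s1 ++ a :: b :: s2 /\
                       (a = b \/ adj a b)).

Definition elem_homotopy (l l' : list V) : Prop :=
  is_loop l /\ is_loop l' /\ (hdelete l l' \/ hdelete l' l).

Inductive homotopic : list V -> list V -> Prop :=
| homotopic_refl : forall l, homotopic l l
| homotopic_step : forall l1 l2 l3,
    elem_homotopy l1 l2 -> homotopic l2 l3 -> homotopic l1 l3.

Definition contractible (l : list V) : Prop := exists v, homotopic l [v].

Definition simply_connected : Prop :=
  forall l, is_loop l -> contractible l.

End Graphs.

From Stdlib Require Import Arith List Lia Classical Wf_nat.
Import ListNotations.

(* Fix the base point v0 of a loop and induct on the largest distance K from v0
   of a vertex of the loop. Sweeping the loop from v0, every vertex v at distance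
   K sits between a vertex a at distance < K and a vertex b at distance <= K.
   If b lies at distance K, the triangle condition gives a common predecessor u of
   v and b, which may be inserted between them. Now both neighbours of v lie in
   pred(v), and the interval condition gives a walk from one to the other inside
   pred(v); since every vertex of pred(v) is adjacent to v, v can be traded for
   that walk one triangle at a time. The resulting loop stays within distance
   K - 1, and a loop within distance 0 is constant. *)

Lemma app_snoc_cons {A} (s l : list A) a : s ++ a :: l = (s ++ [a]) ++ l.
Proof. rewrite <- app_assoc; reflexivity. Qed.

Section Loops.
Variable V : Type.
Variable adj : V -> V -> Prop.

Definition adjr (x y : V) : Prop := adj x y \/ x = y.

Fixpoint linked (l : list V) : Prop :=
  match l with
  | x :: ((y :: _) as t) => adjr x y /\ linked t
  | _ => True
  end.

Lemma chain_linked x s : chain V adj x s <-> linked (x :: s).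
Proof.
  revert x; induction s as [|y s IH]; intros x; simpl; [tauto|].
  rewrite IH; destruct s; simpl; unfold adjr; tauto.
Qed.

Lemma linked_app s a t :
  linked (s ++ a :: t) <-> linked (s ++ [a]) /\ linked (a :: t).
Proof.
  induction s as [|x [|y s] IH]; simpl in *; [tauto|tauto|].
  rewrite IH; tauto.
Qed.

Lemma last_app_cons (p q : list V) z d : last (p ++ z :: q) d = last (z :: q) d.
Proof.
  induction p as [|x p IH]; [reflexivity|].
  simpl; rewrite IH; destruct p, q; reflexivity.
Qed.

Lemma last_cons_self (x : V) s : last (x :: s) x = last s x.
Proof.
  destruct s as [|y s]; [reflexivity|].
  simpl; revert y; induction s as [|z s IH]; intros y; [reflexivity|apply IH].
Qed.

Lemma is_loop_linked l :
  is_loop V adj l <-> exists x, hd_error l = Some x /\ linked l /\ last l x = x.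
Proof.
  split.
  - intros [x [s [-> [Hc Hl]]]]; exists x.
    rewrite <- chain_linked, last_cons_self; auto.
  - intros [x [Hh [Hc Hl]]]; destruct l as [|y s]; [discriminate|].
    injection Hh as ->; exists x, s.
    rewrite chain_linked, <- last_cons_self; auto.
Qed.

Lemma is_loop_splice s1 s2 a b mid mid' :
  is_loop V adj (s1 ++ a :: mid ++ b :: s2) -> linked (a :: mid' ++ [b]) ->
  is_loop V adj (s1 ++ a :: mid' ++ b :: s2).
Proof.
  rewrite !is_loop_linked; intros [x [Hh [Hc Hl]]] Hm; exists x; split; [|split].
  - destruct s1; exact Hh.
  - apply linked_app in Hc; destruct Hc as [Hc1 Hc2].
    apply linked_app; split; [exact Hc1|].
    change (linked ((a :: mid) ++ b :: s2)) in Hc2.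
    change (linked ((a :: mid') ++ b :: s2)).
    apply linked_app in Hc2; apply linked_app; tauto.
  - rewrite app_comm_cons, app_assoc, last_app_cons in Hl |- *; exact Hl.
Qed.

Lemma is_loop_adjr_around s1 s2 a v b :
  is_loop V adj (s1 ++ a :: v :: b :: s2) -> adjr a v /\ adjr v b.
Proof.
  rewrite is_loop_linked; intros [_ [_ [Hc _]]].
  apply linked_app in Hc; simpl in Hc; tauto.
Qed.

Lemma elem_homotopy_delete s1 s2 a x b :
  is_loop V adj (s1 ++ a :: x :: b :: s2) -> adjr a b ->
  elem_homotopy V adj (s1 ++ a :: x :: b :: s2) (s1 ++ a :: b :: s2).
Proof.
  intros Hl Hab; split; [exact Hl|split].
  - exact (is_loop_splice s1 s2 a b [x] [] Hl (conj Hab I)).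
  - left; right; exists s1, a, x, b, s2; unfold adjr in Hab; intuition.
Qed.

Lemma elem_homotopy_insert s1 s2 a x b :
  is_loop V adj (s1 ++ a :: b :: s2) -> adjr a x -> adjr x b -> adjr a b ->
  elem_homotopy V adj (s1 ++ a :: b :: s2) (s1 ++ a :: x :: b :: s2).
Proof.
  intros Hl Hax Hxb Hab; split; [exact Hl|split].
  - exact (is_loop_splice s1 s2 a b [] [x] Hl (conj Hax (conj Hxb I))).
  - right; right; exists s1, a, x, b, s2; unfold adjr in Hab; intuition.
Qed.

Lemma elem_homotopy_dedup x s :
  is_loop V adj (x :: x :: s) -> elem_homotopy V adj (x :: x :: s) (x :: s).
Proof.
  intros Hl; split; [exact Hl|split].
  - rewrite is_loop_linked in *; destruct Hl as [y [Hh [Hc Hl]]].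
    injection Hh as <-; exists x; split; [reflexivity|split].
    + exact (proj2 Hc).
    + rewrite last_cons_self in Hl; exact Hl.
  - left; left; exists [], x, x, s; auto.
Qed.

Lemma homotopic_of_elem l1 l2 :
  elem_homotopy V adj l1 l2 -> homotopic V adj l1 l2.
Proof. intros H; eapply homotopic_step; [exact H|constructor]. Qed.

Lemma homotopic_trans l1 l2 l3 :
  homotopic V adj l1 l2 -> homotopic V adj l2 l3 -> homotopic V adj l1 l3.
Proof. induction 1; intros; [assumption|eapply homotopic_step; eauto]. Qed.

Lemma homotopic_is_loop l1 l2 :
  homotopic V adj l1 l2 -> is_loop V adj l1 -> is_loop V adj l2.
Proof. induction 1 as [|l1 l2 l3 [_ [H _]]]; auto. Qed.

Lemma homotopic_const_loop x s :
  Forall (eq x) s -> is_loop V adj (x :: s) -> homotopic V adj (x :: s) [x].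
Proof.
  induction s as [|y s IH]; intros Hs Hl; [constructor|].
  inversion Hs; subst.
  pose proof (elem_homotopy_dedup y s Hl) as E.
  eapply homotopic_step; [exact E|]; apply IH; [assumption|apply E].
Qed.

(* Each vertex of the walk is inserted between a and v (one triangle, since it
   is adjacent to v), and then the vertex before it is no longer needed. *)
Lemma homotopic_detour (P : V -> Prop) a b :
  walk_in V adj P a b -> forall s1 s2 v, (forall p, P p -> adj p v) ->
  is_loop V adj (s1 ++ a :: v :: b :: s2) ->
  exists t, Forall P t /\
    homotopic V adj (s1 ++ a :: v :: b :: s2) (s1 ++ a :: t ++ b :: s2).
Proof.
  induction 1 as [a Pa|a c b Pa Hac Hw IH]; intros s1 s2 v HP Hl.
  - exists []; split; [constructor|].
    apply homotopic_of_elem, elem_homotopy_delete; [exact Hl|right; reflexivity].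
  - assert (Pc : P c) by (destruct Hw; assumption).
    pose proof (elem_homotopy_insert s1 (b :: s2) a c v Hl (or_introl Hac)
      (or_introl (HP c Pc)) (or_introl (HP a Pa))) as E.
    assert (Hl2 := proj1 (proj2 E)); rewrite (app_snoc_cons s1 _ a) in Hl2.
    destruct (IH (s1 ++ [a]) s2 v HP Hl2) as [t [Ht Hh]].
    exists (c :: t); split; [constructor; assumption|].
    eapply homotopic_step; [exact E|].
    rewrite <- !app_snoc_cons in Hh; exact Hh.
Qed.

End Loops.

Section Distance.
Variable V : Type.
Variable adj : V -> V -> Prop.

Lemma walkn_snoc n u w v : walkn V adj n u w -> adj w v -> walkn V adj (S n) u v.
Proof. induction 1; intros; econstructor; eauto using walkn_refl. Qed.

Lemma dist_exists : connected_graph V adj -> forall u v, exists k, dist V adj u v k.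
Proof.
  intros Hc u v.
  destruct (dec_inh_nat_subset_has_unique_least_element (fun n => walkn V adj n u v)
    (fun n => classic _) (Hc u v)) as [k [Hk _]].
  exists k; exact Hk.
Qed.

Lemma dist_unique u v k k' : dist V adj u v k -> dist V adj u v k' -> k = k'.
Proof. intros [Hk Hmin] [Hk' Hmin']; apply Nat.le_antisymm; auto. Qed.

Lemma dist_refl v : dist V adj v v 0.
Proof. split; [constructor|intros; lia]. Qed.

Lemma dist_0_eq u v : dist V adj u v 0 -> u = v.
Proof. intros [Hw _]; inversion Hw; reflexivity. Qed.

Lemma dist_adj_le v0 a v ka kv :
  adj a v -> dist V adj v0 a ka -> dist V adj v0 v kv -> kv <= S ka.
Proof. intros Hav [Ha _] [_ Hmin]; apply Hmin; eapply walkn_snoc; eauto. Qed.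

Definition ball (v0 : V) (K : nat) (x : V) : Prop :=
  exists d, dist V adj v0 x d /\ d <= K.

Lemma ball_mono v0 K K' x : ball v0 K x -> K <= K' -> ball v0 K' x.
Proof. intros [d [Hd HdK]] HK; exists d; split; [exact Hd|lia]. Qed.

Lemma ball_0 v0 x : ball v0 0 x -> v0 = x.
Proof.
  intros [d [Hd Hd0]]; apply dist_0_eq.
  replace 0 with d by lia; exact Hd.
Qed.

Lemma Forall_ball_exists :
  connected_graph V adj -> forall v0 l, exists K, Forall (ball v0 K) l.
Proof.
  intros Hc v0 l; induction l as [|x l [K HK]]; [exists 0; constructor|].
  destruct (dist_exists Hc v0 x) as [d Hd].
  exists (Nat.max d K); constructor; [exists d; split; [exact Hd|lia]|].
  eapply Forall_impl; [|exact HK]; intros y Hy; eapply ball_mono; [exact Hy|lia].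
Qed.

End Distance.

Arguments dist_unique {V adj u v k k'}.
Arguments dist_adj_le {V adj v0 a v ka kv}.
Arguments ball {V} adj v0 K x.

Section Contraction.
Variable V : Type.
Variable adj : V -> V -> Prop.
Variable v0 : V.
Hypothesis adj_sym : forall u v, adj u v -> adj v u.
Hypothesis triangle : triangle_condition V adj v0.
Hypothesis interval : interval_condition V adj v0.

Lemma predset_of_adj K a v d :
  adj a v -> dist V adj v0 a d -> d <= K -> dist V adj v0 v (S K) ->
  predset V adj v0 v a.
Proof.
  intros Hav Ha HdK Hv.
  pose proof (dist_adj_le Hav Ha Hv).
  split; [exact Hav|]; exists d; split; [exact Ha|].
  replace (S d) with (S K) by lia; exact Hv.
Qed.

Lemma homotopic_detour_pred K s1 s2 a v b :
  dist V adj v0 v (S K) -> predset V adj v0 v a -> predset V adj v0 v b ->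
  is_loop V adj (s1 ++ a :: v :: b :: s2) ->
  exists t, Forall (ball adj v0 K) t /\
    homotopic V adj (s1 ++ a :: v :: b :: s2) (s1 ++ a :: t ++ b :: s2).
Proof.
  intros Hv Ha Hb Hl.
  destruct (homotopic_detour V adj _ a b (interval v a b Ha Hb) s1 s2 v
    (fun p Hp => proj1 Hp) Hl) as [t [Ht Hh]].
  exists t; split; [|exact Hh].
  eapply Forall_impl; [|exact Ht]; intros p [_ [k [Hk Hvk]]].
  exists k; split; [exact Hk|]; pose proof (dist_unique Hvk Hv); lia.
Qed.

Lemma homotopic_lower_vertex K s1 s2 a v b :
  dist V adj v0 v (S K) -> ball adj v0 K a -> ball adj v0 (S K) b ->
  is_loop V adj (s1 ++ a :: v :: b :: s2) ->
  exists t, Forall (ball adj v0 K) t /\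
    homotopic V adj (s1 ++ a :: v :: b :: s2) (s1 ++ a :: t ++ b :: s2).
Proof.
  intros Hv [da [Hda HdaK]] [db [Hdb HdbK]] Hl.
  destruct (is_loop_adjr_around V adj s1 s2 a v b Hl) as [Hav Hvb].
  assert (Hav' : adj a v).
  { destruct Hav as [Hav| ->]; [exact Hav|].
    pose proof (dist_unique Hda Hv); lia. }
  pose proof (predset_of_adj K a v da Hav' Hda HdaK Hv) as Pa.
  destruct Hvb as [Hvb| <-].
  2:{ exists []; split; [constructor|].
      exact (homotopic_of_elem _ _ _ _ (elem_homotopy_delete V adj s1 s2 a v v Hl Hav)). }
  destruct (le_lt_dec db K) as [HdbK'|HdbK'].
  { exact (homotopic_detour_pred K s1 s2 a v b Hv Pa
      (predset_of_adj K b v db (adj_sym _ _ Hvb) Hdb HdbK' Hv) Hl). }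
  replace db with (S K) in Hdb by lia.
  destruct (triangle v b (S K) Hvb Hv Hdb) as [u [Hu [Huv Hub]]].
  rewrite Nat.sub_succ, Nat.sub_0_r in Hu.
  rewrite (app_snoc_cons s1 _ a) in Hl.
  pose proof (elem_homotopy_insert V adj (s1 ++ [a]) s2 v u b Hl
    (or_introl (adj_sym _ _ Huv)) (or_introl Hub) (or_introl Hvb)) as E.
  rewrite <- !app_snoc_cons in E.
  destruct (homotopic_detour_pred K s1 (b :: s2) a v u Hv Pa
    (predset_of_adj K u v K Huv Hu (le_n K) Hv) (proj1 (proj2 E))) as [t [Ht Hh]].
  exists (t ++ [u]); split.
  - apply Forall_app; split; [exact Ht|].
    constructor; [exists K; split; [exact Hu|lia]|constructor].
  - rewrite <- app_assoc; eapply homotopic_step; [exact E|exact Hh].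
Qed.

Lemma homotopic_lower_loop K q : forall p,
  p <> [] -> is_loop V adj (p ++ q) ->
  Forall (ball adj v0 K) p -> Forall (ball adj v0 (S K)) q ->
  exists t, Forall (ball adj v0 K) t /\ homotopic V adj (p ++ q) (p ++ t).
Proof.
  induction q as [|v q IH]; intros p Hp Hl HpK HqK.
  { exists []; split; constructor. }
  inversion HqK as [|? ? [dv [Hdv HdvK]] HqK']; subst.
  destruct (le_lt_dec dv K) as [HvK|HvK].
  - rewrite app_snoc_cons in Hl.
    destruct (IH (p ++ [v])) as [t [Ht Hh]]; try assumption.
    + intros E; symmetry in E; exact (app_cons_not_nil _ _ _ E).
    + apply Forall_app; split; [exact HpK|].
      constructor; [exists dv; split; assumption|constructor].
    + exists (v :: t); split; [constructor; [exists dv; split; assumption|exact Ht]|].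
      rewrite <- !app_snoc_cons in Hh; exact Hh.
  - replace dv with (S K) in Hdv by lia.
    destruct q as [|b q].
    + (* v closes the loop, so it is the first vertex, which lies in the inner ball. *)
      exfalso.
      destruct p as [|x p]; [contradiction|].
      destruct Hl as [y [s [E [_ Hlast]]]]; injection E as <- <-.
      rewrite last_last in Hlast; subst v.
      inversion HpK as [|? ? [dx [Hdx HdxK]] _]; subst.
      pose proof (dist_unique Hdx Hdv); lia.
    + destruct (exists_last Hp) as [p0 [a ->]].
      apply Forall_app in HpK; destruct HpK as [Hp0K HaK]; inversion HaK; subst.
      inversion HqK'; subst.
      rewrite <- app_snoc_cons in Hl.
      destruct (homotopic_lower_vertex K p0 q a v b) as [t [Ht Hh]]; try assumption.
      destruct (IH (p0 ++ a :: t)) as [t' [Ht' Hh']]; try assumption.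
      * intros E; symmetry in E; exact (app_cons_not_nil _ _ _ E).
      * rewrite <- app_assoc; exact (homotopic_is_loop V adj _ _ Hh Hl).
      * apply Forall_app; split; [exact Hp0K|constructor; assumption].
      * exists (t ++ t'); split; [apply Forall_app; split; assumption|].
        rewrite <- !app_assoc in *; simpl in *.
        eapply homotopic_trans; eassumption.
Qed.

Lemma homotopic_contract K : forall s,
  is_loop V adj (v0 :: s) -> Forall (ball adj v0 K) s ->
  homotopic V adj (v0 :: s) [v0].
Proof.
  induction K as [|K IH]; intros s Hl HsK.
  - apply homotopic_const_loop; [|exact Hl].
    eapply Forall_impl; [|exact HsK]; apply ball_0.
  - destruct (homotopic_lower_loop K s [v0]) as [t [Ht Hh]]; try assumption.
    + discriminate.
    + constructor; [exists 0; split; [apply dist_refl|lia]|constructor].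
    + eapply homotopic_trans; [exact Hh|].
      apply IH; [exact (homotopic_is_loop V adj _ _ Hh Hl)|exact Ht].
Qed.

End Contraction.

Theorem mainTheorem2 (V : Type) (adj : V -> V -> Prop)
  (Hsimple : simple_graph V adj) (Hconn : connected_graph V adj)
  (Hweet : weetman V adj) :
  simply_connected V adj.
Proof.
  intros l Hl.
  pose proof Hl as [x [s [-> _]]].
  destruct (Hweet x) as [Htriangle Hinterval].
  destruct (Forall_ball_exists V adj Hconn x s) as [K HK].
  exists x.
  exact (homotopic_contract V adj x (proj1 Hsimple) Htriangle Hinterval K s Hl HK).
Qed.
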